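(* Let $H$ be a Hilbert space and $T$ a densely defined closed operator on $H$. If $T$ is a quasinormal EP operator, then $(T^{*}T)^{\dagger}T\subset T(T^{*}T)^{\dagger}$.
   Context: A densely defined closed operator $T$ on $H$ is EP if $R(T)$ is closed and $R(T)=R(T^{*})$; it is quasinormal if $T(T^{*}T)=(T^{*}T)T$. For a closed operator $A$ with closed range, $C(A)=D(A)\cap N(A)^{\perp}$ and the Moore–Penrose inverse $A^{\dagger}$ is defined on $R(A)\oplus^{\perp}R(A)^{\perp}$ by $A^{\dagger}y=(A|_{C(A)})^{-1}y$ for $y\in R(A)$ and $A^{\dagger}y=0$ for $y\in R(A)^{\perp}$. Products are on natural domains; $A\subset B$ means $D(A)\subset D(B)$ and $B|_{D(A)}=A$. *)

(* Possibly unbounded operators are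
   represented by their graphs (relations H -> H -> Prop). *)
From HB Require Import structures.
From mathcomp Require Import all_boot all_order all_algebra.
From mathcomp Require Import complex.
From mathcomp Require Import reals.
Set Implicit Arguments. Unset Strict Implicit. Unset Printing Implicit Defensive.
Import Order.TTheory GRing.Theory Num.Theory.
Local Open Scope ring_scope.

Section Hilbert.
Variables (R : realType) (H : lmodType R[i]) (ip : H -> H -> R[i]).

Definition hnorm (x : H) : R := Num.sqrt (complex.Re (ip x x)).

Definition hcvg (u : nat -> H) (x : H) : Prop :=
  forall e : R, 0 < e -> exists N : nat, forall n, (N <= n)%N -> hnorm (u n - x) < e.

Definition hcauchy (u : nat -> H) : Prop :=
  forall e : R, 0 < e -> exists N : nat,
    forall m n, (N <= m)%N -> (N <= n)%N -> hnorm (u m - u n) < e.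

Definition is_hilbert : Prop :=
  [/\ forall (a : R[i]) x y z, ip (a *: x + y) z = a * ip x z + ip y z,
      forall x y, ip y x = Num.conj (ip x y),
      forall x, 0 <= ip x x,
      forall x, ip x x = 0 -> x = 0
    & forall u, hcauchy u -> exists x, hcvg u x].

Definition hclosed (S : H -> Prop) : Prop :=
  forall (u : nat -> H) x, (forall n, S (u n)) -> hcvg u x -> S x.

Definition hdense (S : H -> Prop) : Prop :=
  forall x, exists u : nat -> H, (forall n, S (u n)) /\ hcvg u x.

Definition perp (S : H -> Prop) : H -> Prop :=
  fun y => forall x, S x -> ip x y = 0.

Definition op := H -> H -> Prop.

Definition is_linop (T : op) : Prop :=
  [/\ T 0 0,
      forall (a : R[i]) x y x' y', T x y -> T x' y' -> T (a *: x + x') (a *: y + y')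
    & forall x y y', T x y -> T x y' -> y = y'].

Definition dom (T : op) : H -> Prop := fun x => exists y, T x y.
Definition ran (T : op) : H -> Prop := fun y => exists x, T x y.
Definition ker (T : op) : H -> Prop := fun x => T x 0.

Definition closed_op (T : op) : Prop :=
  forall (u v : nat -> H) x y,
    (forall n, T (u n) (v n)) -> hcvg u x -> hcvg v y -> T x y.

Definition dd_closed (T : op) : Prop :=
  [/\ is_linop T, hdense (dom T) & closed_op T].

Definition adj (T : op) : op :=
  fun y z => forall x w, T x w -> ip w y = ip x z.

Definition opmul (A B : op) : op := fun x z => exists y, B x y /\ A y z.

Definition opsub (A B : op) : Prop := forall x y, A x y -> B x y.

Definition opeq (A B : op) : Prop := forall x y, A x y <-> B x y.

(* Moore--Penrose inverse: defined on R(A) (+) R(A)^perp by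
   A^dag y = (A|_{C(A)})^{-1} y on R(A), 0 on R(A)^perp,
   with C(A) = D(A) /\ N(A)^perp. *)
Definition mp (A : op) : op :=
  fun y x => exists y1 y2, [/\ y = y1 + y2, A x y1, perp (ker A) x & perp (ran A) y2].

Definition quasinormal (T : op) : Prop :=
  opeq (opmul T (opmul (adj T) T)) (opmul (opmul (adj T) T) T).

Definition EP (T : op) : Prop :=
  hclosed (ran T) /\ (forall y, ran T y <-> ran (adj T) y).

End Hilbert.

(* Since R(T) = R(T^* ) is closed and R(T^* )^perp = N(T) (T is closed), every
   vector splits as x1 + x2 with x1 in R(T) and x2 in N(T), and every x1 in R(T)
   is T^*T p for some p in R(T).  For Tx = y this gives (T^*T)^dag x = p with
   T x1 = y.  Quasinormality turns T^*T p = x1, T x1 = y into T^*T (T p) = y, and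
   T p lies in R(T), which is orthogonal to N(T^*T) = N(T); hence
   (T^*T)^dag y = T p. *)

From mathcomp Require Import all_boot all_order all_algebra.
From mathcomp Require Import complex.
From mathcomp Require Import reals.
From mathcomp Require Import ring lra.
Import Order.TTheory GRing.Theory Num.Theory.
Local Open Scope ring_scope.
Local Open Scope complex_scope.
Set Implicit Arguments. Unset Strict Implicit.

Lemma eventually_inv_lt (R : archiRealFieldType) (e : R) :
  0 < e -> exists N : nat, forall n, (N <= n)%N -> n.+1%:R^-1 < e.
Proof.
move=> e_gt0; have inv_ge0 : 0 <= e^-1 by rewrite invr_ge0 ltW.
exists (Num.Def.archi_bound e^-1) => n le_Nn.
rewrite -(invrK e) ltf_pV2 ?posrE ?invr_gt0 ?ltr0n //.
by apply: lt_le_trans (archi_boundP inv_ge0) _; rewrite ler_nat leqW.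
Qed.

Section InnerProduct.
Variables (R : realType) (V : lmodType R[i]) (ip : V -> V -> R[i]).
Hypothesis ipDZl : forall (a : R[i]) x y z, ip (a *: x + y) z = a * ip x z + ip y z.
Hypothesis ip_conj : forall x y, ip y x = Num.conj (ip x y).
Hypothesis ip_ge0 : forall x, 0 <= ip x x.

Lemma ip0l z : ip 0 z = 0.
Proof.
have := ipDZl 1 0 0 z; rewrite scaler0 add0r mul1r.
by move/(congr1 (fun t => t - ip 0 z)); rewrite addrK subrr.
Qed.

Lemma ipDl x y z : ip (x + y) z = ip x z + ip y z.
Proof. by rewrite -[x]scale1r ipDZl mul1r scale1r. Qed.

Lemma ipZl a x z : ip (a *: x) z = a * ip x z.
Proof. by rewrite -[a *: x]addr0 ipDZl ip0l addr0. Qed.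

Lemma ipNl x z : ip (- x) z = - ip x z.
Proof. by rewrite -scaleN1r ipZl mulN1r. Qed.

Lemma ipBl x y z : ip (x - y) z = ip x z - ip y z.
Proof. by rewrite ipDl ipNl. Qed.

Lemma ip0r z : ip z 0 = 0.
Proof. by rewrite ip_conj ip0l rmorph0. Qed.

Lemma ipDr x y z : ip z (x + y) = ip z x + ip z y.
Proof. by rewrite ip_conj ipDl rmorphD /= -!ip_conj. Qed.

Lemma ipZr a x z : ip z (a *: x) = Num.conj a * ip z x.
Proof. by rewrite ip_conj ipZl rmorphM /= -!ip_conj. Qed.

Lemma ipNr x z : ip z (- x) = - ip z x.
Proof. by rewrite ip_conj ipNl rmorphN /= -!ip_conj. Qed.

Lemma ipBr x y z : ip z (x - y) = ip z x - ip z y.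
Proof. by rewrite ipDr ipNr. Qed.

Local Ltac ip_expand :=
  rewrite ?(ipDl, ipBl, ipZl, ipNl, ip0l, ipDr, ipBr, ipZr, ipNr, ip0r).

Definition hnorm2 v : R := complex.Re (ip v v).

Lemma hnorm2E v : (hnorm2 v)%:C = ip v v.
Proof. by rewrite [RHS]complexE (ger0_Im (ip_ge0 v)) mulr0 addr0. Qed.

Lemma hnorm2_ge0 v : 0 <= hnorm2 v.
Proof. by rewrite -ler0c hnorm2E. Qed.

Lemma hnormE v : hnorm ip v = Num.sqrt (hnorm2 v).
Proof. by []. Qed.

Lemma hnorm_lt_sqrt v e : 0 < e -> (hnorm ip v < Num.sqrt e) = (hnorm2 v < e).
Proof. by rewrite hnormE; exact: ltr_sqrt. Qed.

Lemma hnorm_lt v e : 0 < e -> hnorm2 v < e ^+ 2 -> hnorm ip v < e.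
Proof.
move=> e_gt0; rewrite -hnorm_lt_sqrt ?exprn_gt0 //.
by rewrite sqrtr_sqr ger0_norm // ltW.
Qed.

Lemma apollonius x p r :
  hnorm2 (p - r) + 4%:R * hnorm2 (x - 2^-1 *: (p + r)) =
  2%:R * hnorm2 (x - p) + 2%:R * hnorm2 (x - r).
Proof.
apply: complexI; rewrite !(rmorphD, rmorphM, rmorph_nat) /= !hnorm2E; ip_expand.
rewrite fmorphV rmorph_nat /=.
have two_neq0 : (2 : R[i]) != 0 by rewrite pnatr_eq0.
by field.
Qed.

Lemma parallelogram x p r :
  hnorm2 (x - r) + hnorm2 (x - (p + p - r)) =
  2%:R * hnorm2 (x - p) + 2%:R * hnorm2 (p - r).
Proof.
by apply: complexI; rewrite !(rmorphD, rmorphM, rmorph_nat) /= !hnorm2E; ip_expand; ring.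
Qed.

(* With [t = e * conj <k, v>] and [e = 1 / (hnorm2 k + 1)],
   [hnorm2 (v - t k) = hnorm2 v - e |<k, v>|^2 (2 - e hnorm2 k)]. *)
Lemma orth_of_min_dist v k :
  (forall t : R[i], hnorm2 v <= hnorm2 (v - t *: k)) -> ip k v = 0.
Proof.
move=> v_min; set c := ip k v.
set r := complex.Re (c * Num.conj c).
have cc_r : c * Num.conj c = r%:C.
  by rewrite /r {1}(complexE (c * _)) (ger0_Im (mulcJ_ge0 c)) mulr0 addr0.
have r_ge0 : 0 <= r by rewrite -ler0c -cc_r mulcJ_ge0.
set e := (hnorm2 k + 1)^-1.
have k_ge0 := hnorm2_ge0 k.
have e_gt0 : 0 < e by rewrite invr_gt0; lra.
have ek_le1 : e * hnorm2 k <= 1.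
  by rewrite /e mulrC ler_pdivrMr; lra.
have expand : hnorm2 (v - (e%:C * Num.conj c) *: k) =
              hnorm2 v - 2%:R * e * r + e * e * r * hnorm2 k.
  apply: complexI; rewrite hnorm2E !(rmorphD, rmorphB, rmorphN, rmorphM, rmorph_nat) /=.
  have conj_e : Num.conj e%:C = e%:C by exact: conjc_real.
  ip_expand; rewrite (ip_conj k v) -!hnorm2E -/c !rmorphM /= conj_e conjCK rmorph1 -cc_r.
  ring.
have := v_min (e%:C * Num.conj c); rewrite expand => le_v.
have factor_gt0 : 0 < e * (2%:R - e * hnorm2 k) by rewrite mulr_gt0 //; lra.
have r0 : r = 0.
  by apply/eqP; rewrite eq_le r_ge0 andbT -(pmulr_rle0 _ factor_gt0); nra.
by move: cc_r; rewrite r0 => /eqP; rewrite mulf_eq0 conjC_eq0 orbb => /eqP.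
Qed.

Section Projection.
Variable M : V -> Prop.
Hypothesis M0 : M 0.
Hypothesis MDZ : forall (a : R[i]) x y, M x -> M y -> M (a *: x + y).
Hypothesis M_complete :
  forall u, (forall n, M (u n)) -> hcauchy ip u -> exists2 x, M x & hcvg ip u x.
Variable x : V.

Let dists (r : R) : Prop := exists2 m, M m & r = hnorm2 (x - m).
Let d : R := inf dists.

Let dists_has_inf : classical_sets.has_inf dists.
Proof.
split; first by exists (hnorm2 (x - 0)), 0.
by exists 0 => _ [m _ ->]; exact: hnorm2_ge0.
Qed.

Lemma dist_le m : M m -> d <= hnorm2 (x - m).
Proof. by move=> Mm; apply: (ge_inf dists_has_inf.2); exists m. Qed.

Let approximating (ms : nat -> V) : Prop :=
  forall n, M (ms n) /\ hnorm2 (x - ms n) < d + n.+1%:R^-1.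

Lemma exists_approximating : exists ms, approximating ms.
Proof.
suff /boolp.choice[ms ms_approx] :
    forall n, exists m, M m /\ hnorm2 (x - m) < d + n.+1%:R^-1 by exists ms.
move=> n.
have inv_gt0 : 0 < n.+1%:R^-1 :> R by rewrite invr_gt0 ltr0n.
have [_ [m Mm ->] lt_md] := inf_adherent inv_gt0 dists_has_inf.
by exists m.
Qed.

Let MZ a y : M y -> M (a *: y).
Proof. by move=> My; rewrite -[a *: y]addr0; apply: MDZ. Qed.

Let MD y z : M y -> M z -> M (y + z).
Proof. by move=> My Mz; rewrite -[y]scale1r; apply: MDZ. Qed.

Let MB y z : M y -> M z -> M (y - z).
Proof. by move=> My Mz; rewrite -scaleN1r addrC; apply: MDZ. Qed.

(* By Apollonius, the midpoint of [ms a] and [ms b] lies in [M], so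
   [hnorm2 (ms a - ms b) <= 2 / a.+1 + 2 / b.+1]. *)
Lemma approximating_cauchy ms : approximating ms -> hcauchy ip ms.
Proof.
move=> ms_approx e e_gt0.
have e24_gt0 : 0 < e ^+ 2 / 4%:R by rewrite divr_gt0 // exprn_gt0.
have [N ltN] := eventually_inv_lt e24_gt0.
exists N => a b le_Na le_Nb; apply: hnorm_lt => //.
have := apollonius x (ms a) (ms b).
have := dist_le (MZ (2^-1) (MD (ms_approx a).1 (ms_approx b).1)).
have := (ms_approx a).2; have := (ms_approx b).2.
have := ltN a le_Na; have := ltN b le_Nb.
move: (e ^+ 2) (a.+1%:R^-1 : R) (b.+1%:R^-1 : R) => E ia ib; lra.
Qed.

(* The reflection [ms n + ms n - m] of [m] through [ms n] lies in [M]. *)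
Lemma approximating_limit ms m :
  approximating ms -> M m -> hcvg ip ms m -> hnorm2 (x - m) <= d.
Proof.
move=> ms_approx Mm ms_m; apply/ler_addgt0Pr => e e_gt0.
have e8_gt0 : 0 < e / 8%:R by rewrite divr_gt0.
have [N1 ltN1] := eventually_inv_lt e8_gt0.
have [N2 ltN2] := ms_m (Num.sqrt (e / 8%:R)) ltac:(by rewrite sqrtr_gt0).
pose n := maxn N1 N2.
have := ltN1 n (leq_maxl _ _).
have := ltN2 n (leq_maxr _ _); rewrite hnorm_lt_sqrt //.
have := parallelogram x (ms n) m.
have := dist_le (MB (MD (ms_approx n).1 (ms_approx n).1) Mm).
have := (ms_approx n).2; have := hnorm2_ge0 (ms n - m).
move: (n.+1%:R^-1 : R) => i; lra.
Qed.

Theorem orth_proj : exists2 m, M m & perp ip M (x - m).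
Proof.
have [ms ms_approx] := exists_approximating.
have [m Mm ms_m] := M_complete (fun n => (ms_approx n).1) (approximating_cauchy ms_approx).
exists m => // k Mk; apply: orth_of_min_dist => t.
have -> : x - m - t *: k = x - (t *: k + m) by rewrite opprD addrA addrAC.
exact: le_trans (approximating_limit ms_approx Mm ms_m) (dist_le (MDZ t Mk Mm)).
Qed.

End Projection.

End InnerProduct.

Section Operators.
Variables (R : realType) (V : lmodType R[i]) (ip : V -> V -> R[i]).
Hypothesis ipDZl : forall (a : R[i]) x y z, ip (a *: x + y) z = a * ip x z + ip y z.
Hypothesis ip_conj : forall x y, ip y x = Num.conj (ip x y).
Hypothesis ip_ge0 : forall x, 0 <= ip x x.
Hypothesis ip_eq0 : forall x, ip x x = 0 -> x = 0.
Hypothesis ip_complete : forall u, hcauchy ip u -> exists x, hcvg ip u x.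

Definition sub_closed (S : op V) : Prop :=
  forall a b a' b', S a b -> S a' b' -> S (a - a') (b - b').

Lemma linop_sub_closed (S : op V) :
  (forall (a : R[i]) x y x' y', S x y -> S x' y' -> S (a *: x + x') (a *: y + y')) ->
  sub_closed S.
Proof.
move=> SDZ a b a' b' Sab Sab'.
by have := SDZ (-1) _ _ _ _ Sab' Sab; rewrite !scaleN1r ![- _ + _]addrC.
Qed.

Lemma adj_sub_closed (T : op V) : sub_closed (adj ip T).
Proof.
move=> a b a' b' adj_ab adj_ab' x w Txw.
by rewrite !(ipBr ipDZl ip_conj) (adj_ab _ _ Txw) (adj_ab' _ _ Txw).
Qed.

Lemma opmul_sub_closed (S S' : op V) :
  sub_closed S -> sub_closed S' -> sub_closed (opmul S S').
Proof.
move=> S_sub S'_sub a b a' b' [c [S'ac Scb]] [c' [S'ac' Sc'b']].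
by exists (c - c'); split; [apply: S'_sub | apply: S_sub].
Qed.

Lemma mp_eq (A : op V) v y z :
  sub_closed A -> A v y -> perp ip (ker A) v -> mp ip A y z -> z = v.
Proof.
move=> A_sub Avy v_perp [y1 [y2 [y_eq Azy1 z_perp y2_perp]]].
rewrite {}y_eq in Avy.
have Ay2 : A (v - z) y2 by have := A_sub _ _ _ _ Avy Azy1; rewrite (addrC (y1 + y2)) addKr.
have y2_0 : y2 = 0 by apply: ip_eq0; apply: y2_perp; exists (v - z).
rewrite y2_0 in Ay2.
apply/esym/subr0_eq/ip_eq0.
by rewrite (ipBr ipDZl ip_conj) v_perp ?z_perp ?subr0.
Qed.

Lemma ker_adj_mul (T : op V) n : opmul (adj ip T) T n 0 -> T n 0.
Proof.
move=> [w [Tnw adj_w]]; have := adj_w n w Tnw.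
by rewrite (ip0r ipDZl ip_conj) => /ip_eq0 <-.
Qed.

Lemma adj_ker_of_perp_ran (T : op V) n : perp ip (ran T) n -> adj ip T n 0.
Proof.
by move=> n_perp x w Txw; rewrite (ip0r ipDZl ip_conj); apply: n_perp; exists x.
Qed.

Definition ip_pair (p q : V * V) : R[i] := ip p.1 q.1 + ip p.2 q.2.

Lemma ip_pairDZl (a : R[i]) p q r :
  ip_pair (a *: p + q) r = a * ip_pair p r + ip_pair q r.
Proof. by rewrite /ip_pair /= !ipDZl; ring. Qed.

Lemma ip_pair_conj p q : ip_pair q p = Num.conj (ip_pair p q).
Proof. by rewrite /ip_pair rmorphD /= -!ip_conj. Qed.

Lemma ip_pair_ge0 p : 0 <= ip_pair p p.
Proof. exact: addr_ge0. Qed.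

Lemma hnorm2_pair p : hnorm2 ip_pair p = hnorm2 ip p.1 + hnorm2 ip p.2.
Proof. exact: raddfD. Qed.

Lemma hnorm_pair_ge p : hnorm ip p.1 <= hnorm ip_pair p /\ hnorm ip p.2 <= hnorm ip_pair p.
Proof.
have := hnorm2_ge0 ip_ge0 p.1; have := hnorm2_ge0 ip_ge0 p.2.
rewrite !hnormE hnorm2_pair => ge0_2 ge0_1.
by rewrite !ler_sqrt ?addr_ge0 //; split; lra.
Qed.

Lemma hcauchy_pair u :
  hcauchy ip_pair u -> hcauchy ip (fun n => (u n).1) /\ hcauchy ip (fun n => (u n).2).
Proof.
move=> u_cauchy; split=> e /u_cauchy[N uN]; exists N => m n le_Nm le_Nn.
  exact: le_lt_trans (hnorm_pair_ge _).1 (uN m n le_Nm le_Nn).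
exact: le_lt_trans (hnorm_pair_ge _).2 (uN m n le_Nm le_Nn).
Qed.

Lemma hcvg_pair u x1 x2 :
  hcvg ip (fun n => (u n).1) x1 -> hcvg ip (fun n => (u n).2) x2 ->
  hcvg ip_pair u (x1, x2).
Proof.
move=> u1_x1 u2_x2 e e_gt0.
have e2_gt0 : 0 < e ^+ 2 / 2%:R by rewrite divr_gt0 // exprn_gt0.
have sqrt_gt0 : 0 < Num.sqrt (e ^+ 2 / 2%:R) by rewrite sqrtr_gt0.
have [N1 ltN1] := u1_x1 _ sqrt_gt0; have [N2 ltN2] := u2_x2 _ sqrt_gt0.
exists (maxn N1 N2) => n; rewrite geq_max => /andP[le_N1n le_N2n].
have := ltN1 n le_N1n; have := ltN2 n le_N2n.
rewrite !hnorm_lt_sqrt // => lt2 lt1; apply: hnorm_lt => //; rewrite hnorm2_pair /=.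
by move: lt1 lt2; move: (e ^+ 2) => E; lra.
Qed.

Section ClosedOperator.
Variable T : op V.
Hypothesis T00 : T 0 0.
Hypothesis TDZ :
  forall (a : R[i]) x y x' y', T x y -> T x' y' -> T (a *: x + x') (a *: y + y').
Hypothesis T_closed : closed_op ip T.

Lemma graph_complete u :
  (forall n, T (u n).1 (u n).2) -> hcauchy ip_pair u ->
  exists2 p, T p.1 p.2 & hcvg ip_pair u p.
Proof.
move=> u_graph u_cauchy.
have [/ip_complete[x1 u1_x1] /ip_complete[x2 u2_x2]] := hcauchy_pair u_cauchy.
by exists (x1, x2); [exact: T_closed u_graph u1_x1 u2_x2 | exact: hcvg_pair].
Qed.

(* [n] is projected onto the (complete) graph of [T] in [V * V]: the residual
   [(a, b)] is orthogonal to the graph, i.e. [T^* b = - a], and then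
   [n \perp R(T^* )] forces [(a, b) = 0]. *)
Lemma ker_of_perp_ran_adj n : perp ip (ran (adj ip T)) n -> T n 0.
Proof.
move=> n_perp.
have graphDZ (a : R[i]) p q : T p.1 p.2 -> T q.1 q.2 -> T (a *: p + q).1 (a *: p + q).2.
  exact: TDZ.
have [[g1 g2] /= Tg g_perp] :=
  orth_proj ip_pairDZl ip_pair_conj ip_pair_ge0 (M := fun p => T p.1 p.2)
    T00 graphDZ graph_complete (n, 0).
set a := n - g1; set b := 0 - g2.
have g_perp' x w : T x w -> ip x a + ip w b = 0 by move=> Txw; exact: g_perp (x, w) Txw.
have adj_b : adj ip T b (- a).
  move=> x w /g_perp' /eqP; rewrite (ipNr ipDZl ip_conj) addrC addr_eq0.
  by move/eqP.
have a_n : ip a n = 0.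
  have := n_perp _ (ex_intro _ b adj_b); rewrite (ipNl ipDZl) => /eqP.
  by rewrite oppr_eq0 => /eqP.
have : ip a a + ip b b = 0.
  rewrite {1}/a {1}/b !(ipBl ipDZl) (ip0l ipDZl) (ip_conj a n) a_n rmorph0.
  by rewrite !sub0r -opprD g_perp' ?oppr0.
move/eqP; rewrite paddr_eq0 ?ip_ge0 // => /andP[/eqP/ip_eq0 a0 /eqP/ip_eq0 b0].
move: Tg; rewrite (subr0_eq a0).
by move: b0; rewrite /b sub0r => /eqP; rewrite oppr_eq0 => /eqP ->.
Qed.

Section QuasinormalEP.
Hypothesis T_quasinormal : quasinormal ip T.
Hypothesis T_EP : EP ip T.

Lemma ker_of_perp_ran n : perp ip (ran T) n -> T n 0.
Proof.
by move=> n_perp; apply: ker_of_perp_ran_adj => y /T_EP.2; exact: n_perp.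
Qed.

Lemma orth_proj_ran x : exists2 x1, ran T x1 & perp ip (ran T) (x - x1).
Proof.
apply: (orth_proj ipDZl ip_conj ip_ge0 (M := ran T)); first by exists 0.
  by move=> a y z [y' Ty'y] [z' Tz'z]; exists (a *: y' + z'); exact: TDZ.
move=> u u_ran u_cauchy; have [y u_y] := ip_complete u_cauchy.
by exists y => //; exact: T_EP.1 u_ran u_y.
Qed.

Lemma preimage_in_ran (S : op V) x y :
  sub_closed S -> (forall n, perp ip (ran T) n -> S n 0) -> S x y ->
  exists x1, [/\ ran T x1, perp ip (ran T) (x - x1) & S x1 y].
Proof.
move=> S_sub S_perp Sxy; have [x1 ran_x1 x_perp] := orth_proj_ran x.
exists x1; split=> //.
by have := S_sub _ _ _ _ Sxy (S_perp _ x_perp); rewrite opprB subrKC subr0.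
Qed.

Local Notation A := (opmul (adj ip T) T).

Lemma A_sub_closed : sub_closed A.
Proof. exact: opmul_sub_closed (@adj_sub_closed T) (linop_sub_closed TDZ). Qed.

Lemma perp_ker_A p : ran T p -> perp ip (ker A) p.
Proof.
by move=> /T_EP.2[b adj_b] k /ker_adj_mul /adj_b <-; rewrite (ip0l ipDZl).
Qed.

Lemma ran_A_sub y : ran A y -> ran T y.
Proof. by move=> [p [w [_ adj_w]]]; apply/T_EP.2; exists w. Qed.

Lemma A_onto_ran x1 : ran T x1 -> exists2 p, ran T p & A p x1.
Proof.
move=> /T_EP.2[b adj_b].
have [b1 [[p Tpb1] _ adj_b1]] :=
  preimage_in_ran (@adj_sub_closed T) (@adj_ker_of_perp_ran T) adj_b.
have [p1 [ran_p1 _ Tp1b1]] :=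
  preimage_in_ran (linop_sub_closed TDZ) ker_of_perp_ran Tpb1.
by exists p1 => //; exists b1.
Qed.

Lemma mp_A_mul_sub : opsub (opmul (mp ip A) T) (opmul T (mp ip A)).
Proof.
move=> x z [y [Txy y_z]].
have [x1 [ran_x1 x_perp Tx1y]] :=
  preimage_in_ran (linop_sub_closed TDZ) ker_of_perp_ran Txy.
have [p ran_p Apx1] := A_onto_ran ran_x1.
have [v [Tpv Avy]] : opmul A T p y by apply/T_quasinormal; exists x1.
exists p; split.
  exists x1, (x - x1); split; first by rewrite subrKC.
  - exact: Apx1.
  - exact: perp_ker_A.
  - by move=> w /ran_A_sub; exact: x_perp.
by rewrite (mp_eq A_sub_closed Avy (perp_ker_A (ex_intro _ p Tpv)) y_z).
Qed.

End QuasinormalEP.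

End ClosedOperator.
End Operators.

Theorem lemma2p16 (R : realType) (H : lmodType R[i]) (ip : H -> H -> R[i])
  (hH : is_hilbert ip) (T : op H)
  (hT : dd_closed ip T) (hq : quasinormal ip T) (hEP : EP ip T) :
  opsub (opmul (mp ip (opmul (adj ip T) T)) T)
        (opmul T (mp ip (opmul (adj ip T) T))).
Proof.
case: hH => ipDZl ip_conj ip_ge0 ip_eq0 ip_complete.
case: hT => [[T00 TDZ _] _ T_closed].
exact: (mp_A_mul_sub ipDZl ip_conj ip_ge0 ip_eq0 ip_complete T00 TDZ T_closed hq hEP).
Qed.
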